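(* Let $\Sigma=(+1,-1,-1,-1,-1)$. If $\delta=1$ then $\mathcal P_{\Sigma,\delta}H_5=\varnothing$. If $\delta=\omega$ or $\delta=\omega^2$ then $\mathcal P_{\Sigma,\delta}H_5\neq\varnothing$.
   Context: $V=\mathbb C^3$ with Hermitian form of signature $(-,+,+)$; the sign $\sigma p$ of a nonisotropic $p\in\mathbb PV$ is $-1$ if $\langle p,p\rangle<0$ and $+1$ if $\langle p,p\rangle>0$. $\mathrm{SU}(2,1)$ = determinant-one form-preserving maps, $\mathrm{PU}(2,1)=\mathrm{SU}(2,1)/\{1,\omega,\omega^2\}$, $\omega=e^{2\pi i/3}$. For nonisotropic $p$, $R^px=2\frac{\langle x,p\rangle}{\langle p,p\rangle}p-x$; $\mathrm{ta}(p,q)=\frac{\langle p,q\rangle\langle q,p\rangle}{\langle p,p\rangle\langle q,q\rangle}$. $H_5=\langle r_1,\dots,r_5\mid r_i^2=r_5\cdots r_1=1\rangle$. $\mathcal P_{\Sigma,\delta}H_5$ is the set of representations $\varrho:H_5\to\mathrm{PU}(2,1)$ with $\varrho(r_i)=R^{p_i}$ for nonisotropic $p_i$ such that $\mathrm{ta}(p_i,p_j)\neq0,1$ for $i\neq j$, $\sigma p_i=\sigma_i$, and $R^{p_5}\cdots R^{p_1}=\delta$ in $\mathrm{SU}(2,1)$. *)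

(* The complex numbers are modelled as R[i] for an arbitrary
   real closed field R (C = R[i] for R = the reals is one instance). *)
From HB Require Import structures.
From mathcomp Require Import all_boot all_order all_algebra.
From mathcomp Require Import complex.
Set Implicit Arguments. Unset Strict Implicit. Unset Printing Implicit Defensive.
Import Order.TTheory GRing.Theory Num.Theory.
Local Open Scope ring_scope.

Section PU21.
Variable R : rcfType.
Local Notation C := (R[i]).

(* V = C^3 as column vectors; Hermitian form of signature (-,+,+),
   linear in the first argument, antilinear in the second:
   <x,y> = - x_0 conj(y_0) + x_1 conj(y_1) + x_2 conj(y_2). *)
Definition sgnJ (i : 'I_3) : C := if (i == 0 :> nat) then -1 else 1.

Definition herm (x y : 'cV[C]_3) : C :=
  \sum_(i < 3) sgnJ i * x i 0 * (y i 0)^*.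

Definition nonisotropic (p : 'cV[C]_3) : bool := herm p p != 0.

Definition has_sign (s : int) (p : 'cV[C]_3) : Prop :=
  (s = (-1)%Z /\ herm p p < 0) \/ (s = 1%Z /\ 0 < herm p p).

(* R^p x = 2 <x,p>/<p,p> p - x, as a 3x3 matrix acting on column vectors *)
Definition refl (p : 'cV[C]_3) : 'M[C]_3 :=
  \matrix_(i < 3, j < 3)
     (2 * p i 0 * sgnJ j * (p j 0)^* / herm p p - (i == j)%:R).

Definition ta (p q : 'cV[C]_3) : C :=
  herm p q * herm q p / (herm p p * herm q q).

Definition omega : C := (-1 + 'i * sqrtC 3) / 2.

(* A representation in P_{Sigma,delta} H_5 is given by the points p_1..p_5
   (indexed 0..4 here) with rho(r_i) = R^{p_i}; the conditions: *)
Definition in_P (Sigma : 'I_5 -> int) (delta : C) (p : 'I_5 -> 'cV[C]_3) : Prop :=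
  [/\ forall i, nonisotropic (p i),
      forall i j, i != j -> ta (p i) (p j) != 0 /\ ta (p i) (p j) != 1,
      forall i, has_sign (Sigma i) (p i) &
      refl (p 4) *m refl (p 3) *m refl (p 2) *m refl (p 1) *m refl (p 0)
        = delta%:M ].

End PU21.

Definition Sigma8 (i : 'I_5) : int := if (i == 0 :> nat) then 1%Z else (-1)%Z.

From Stdlib Require Import ZArith.
From HB Require Import structures.
From mathcomp Require Import all_boot all_order all_algebra.
From mathcomp Require Import complex ring ssrZ.
Import Order.TTheory GRing.Theory Num.Theory.
Local Open Scope ring_scope.

(* For delta = 1: p 0 is positive, so some negative vector n is orthogonal to
   it and R^(p 0) n = - n; the relation then gives
   R^(p 2) R^(p 1) n = - R^(p 3) R^(p 4) n.  But for negative n, a, b,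
   Re <R^a n, R^b n> < 0: by reverse Cauchy-Schwarz <R^a n, n> <= <n, n> < 0,
   and the Gram determinant of n, R^a n, R^b n is <= 0 in signature (1, 2).
   Pairing both sides with n thus yields two negative numbers that are
   opposite.
   For delta = omega, an explicit configuration with coordinates in the
   Eisenstein integers Z[omega] is checked by exact integer computation
   (<p, p> R^p has coordinates in Z[omega]).  Complex conjugation maps
   P_{Sigma, delta} onto P_{Sigma, conj delta}, and conj omega = omega^2. *)

Local Notation i0 := (@Ordinal 3 0 isT).
Local Notation i1 := (@Ordinal 3 1 isT).
Local Notation i2 := (@Ordinal 3 2 isT).

(* The Gram determinant of n, x, y when <n,n> = <x,x> = <y,y> = N,
   <x,n> = X, <y,n> = Y, <x,y> = z, zz = z conj(z) and s = z + conj(z). *)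
Lemma gram_cubic_lt0 (F : numDomainType) (N X Y zz s : F) :
  N < 0 -> X <= N -> Y <= N -> 0 <= zz -> s \is Num.real ->
  N ^+ 3 - N * zz - N * X ^+ 2 - N * Y ^+ 2 + X * Y * s <= 0 -> s < 0.
Proof.
move=> N_lt0 XN YN zz_ge0 s_real bound.
rewrite real_ltNge ?real0 //; apply/negP => s_ge0.
have nN_gt0 : 0 < - N by rewrite oppr_gt0.
have nX_gt0 : 0 < - X by rewrite (lt_le_trans nN_gt0) ?lerN2.
have nY_gt0 : 0 < - Y by rewrite (lt_le_trans nN_gt0) ?lerN2.
have XX_ge : (- N) * (- N) <= (- X) * (- X).
  by apply: ler_pM; rewrite ?lerN2 // ltW.
suff : 0 < N ^+ 3 - N * zz - N * X ^+ 2 - N * Y ^+ 2 + X * Y * s.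
  by move/lt_le_trans/(_ bound); rewrite ltxx.
have -> : N ^+ 3 - N * zz - N * X ^+ 2 - N * Y ^+ 2 + X * Y * s =
  (- N) * ((- Y) * (- Y)) + (- N) * ((- X) * (- X) - (- N) * (- N))
  + (- N) * zz + ((- X) * (- Y)) * s by ring.
apply: ltr_wpDr; first by rewrite mulr_ge0 // ltW // mulr_gt0.
apply: ltr_wpDr; first by rewrite mulr_ge0 // ltW.
apply: ltr_pwDl; first by rewrite !mulr_gt0.
by rewrite mulr_ge0 ?subr_ge0 // ltW.
Qed.

Lemma sum3 (V : nmodType) (F : 'I_3 -> V) : \sum_(k < 3) F k = F i0 + F i1 + F i2.
Proof.
rewrite !big_ord_recr big_ord0 /= add0r.
by congr (F _ + F _ + F _); apply: val_inj.
Qed.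

Lemma ord3P (k : 'I_3) : [\/ k = i0, k = i1 | k = i2].
Proof.
by case: k => [[|[|[|//]]] ?]; [apply: Or31 | apply: Or32 | apply: Or33]; apply: val_inj.
Qed.

Section HermitianForm.
Variable R : rcfType.
Local Notation C := (R[i]).
Implicit Types (x y z n p q a b : 'cV[C]_3) (c : C).

(* Stated at type C so that [ring] recognises the rewritten terms. *)
Lemma conjCD c c' : (c + c')^* = c^* + c'^*. Proof. exact: rmorphD. Qed.
Lemma conjCB c c' : (c - c')^* = c^* - c'^*. Proof. exact: rmorphB. Qed.
Lemma conjCN c : (- c)^* = - c^*. Proof. exact: rmorphN. Qed.
Lemma conjCM c c' : (c * c')^* = c^* * c'^*. Proof. exact: rmorphM. Qed.
Lemma conjCV c : (c^-1)^* = c^*^-1. Proof. exact: fmorphV. Qed.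

Lemma hermE x y : herm x y =
  - (x i0 0 * (y i0 0)^*) + x i1 0 * (y i1 0)^* + x i2 0 * (y i2 0)^*.
Proof. by rewrite /herm sum3 /sgnJ /=; ring. Qed.

Lemma conj_herm x y : (herm x y)^* = herm y x.
Proof. by rewrite !hermE !(conjCD, conjCN, conjCM, conjCK); ring. Qed.

Lemma hermBl x y z : herm (x - y) z = herm x z - herm y z.
Proof. by rewrite !hermE !mxE; ring. Qed.

Lemma hermNl x z : herm (- x) z = - herm x z.
Proof. by rewrite !hermE !mxE; ring. Qed.

Lemma hermZl c x z : herm (c *: x) z = c * herm x z.
Proof. by rewrite !hermE !mxE; ring. Qed.

Lemma hermBr x y z : herm z (x - y) = herm z x - herm z y.
Proof. by rewrite -conj_herm hermBl conjCB !conj_herm. Qed.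

Lemma hermZr c x z : herm z (c *: x) = c^* * herm z x.
Proof. by rewrite -conj_herm hermZl conjCM conj_herm. Qed.

Lemma reflE p x : refl p *m x = (2 * herm x p / herm p p) *: p - x.
Proof.
apply/matrixP => i j; rewrite (ord1 j) !mxE sum3 !mxE !hermE /sgnJ.
by case: (ord3P i) => ->; rewrite /=; ring.
Qed.

Lemma refl_adj p x y : herm (refl p *m x) y = herm x (refl p *m y).
Proof.
rewrite !reflE hermBl hermZl hermBr hermZr.
by rewrite !(conjCM, conjCV, conjC_nat) !conj_herm; ring.
Qed.

Lemma herm_refl_polar p x : herm p p != 0 -> herm (refl p *m x) p = herm x p.
Proof. by move=> hp; rewrite reflE hermBl hermZl; field. Qed.

Lemma reflK p x : herm p p != 0 -> refl p *m (refl p *m x) = x.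
Proof.
move=> hp; rewrite [refl p *m (refl p *m x)]reflE herm_refl_polar //.
by rewrite reflE opprB addrC subrK.
Qed.

Lemma refl_orthogonal {p x} : herm x p = 0 -> refl p *m x = - x.
Proof. by move=> hxp; rewrite reflE hxp mulr0 mul0r scale0r sub0r. Qed.

Lemma refl_isometry p x : herm p p != 0 ->
  herm (refl p *m x) (refl p *m x) = herm x x.
Proof. by move=> hp; rewrite refl_adj reflK. Qed.

Lemma herm_self_ge0_orthogonal {n v} :
  herm n n < 0 -> herm v n = 0 -> 0 <= herm v v.
Proof.
(* |v0 n0| = |v1 n1 + v2 n2| <= |(v1, v2)| |(n1, n2)| < |(v1, v2)| |n0|. *)
rewrite !hermE.
set n0 := n i0 0; set n1 := n i1 0; set n2 := n i2 0.
set v0 := v i0 0; set v1 := v i1 0; set v2 := v i2 0.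
set t := v1 * n1^* + v2 * n2^*.
set N0 := n0 * n0^*; set NQ := n1 * n1^* + n2 * n2^*.
set V0 := v0 * v0^*; set VQ := v1 * v1^* + v2 * v2^*.
move=> n_neg v_perp.
have v0n0 : v0 * n0^* = t.
  by apply/eqP; rewrite -subr_eq0 -oppr_eq0; apply/eqP; rewrite -v_perp /t; ring.
have lagrange : VQ * NQ - t * t^* = (v1 * n2 - v2 * n1) * (v1 * n2 - v2 * n1)^*.
  by rewrite /VQ /NQ /t !(conjCB, conjCD, conjCM, conjCK); ring.
have V0N0 : V0 * N0 = t * t^* by rewrite -v0n0 /V0 /N0 !conjCM conjCK; ring.
have NQ_ge0 : 0 <= NQ by rewrite addr_ge0 // mul_conjC_ge0.
have VQ_ge0 : 0 <= VQ by rewrite addr_ge0 // mul_conjC_ge0.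
have NQ_lt : NQ < N0 by move: n_neg; rewrite -addrA addrC subr_lt0.
have N0_gt0 : 0 < N0 := le_lt_trans NQ_ge0 NQ_lt.
rewrite -addrA -(pmulr_rge0 _ N0_gt0).
have -> : N0 * (- V0 + VQ) = (N0 - NQ) * VQ + (VQ * NQ - t * t^*).
  by rewrite mulrDr mulrN (mulrC N0 V0) V0N0; ring.
by rewrite lagrange addr_ge0 ?mul_conjC_ge0 // mulr_ge0 // subr_ge0 ltW.
Qed.

Lemma herm_reverse_CS n a : herm n n < 0 ->
  herm n n * herm a a <= herm n a * herm a n.
Proof.
move=> n_neg; have n_neq0 : herm n n != 0 by rewrite lt_eqF.
set v := a - (herm a n / herm n n) *: n.
have v_perp : herm v n = 0 by rewrite /v hermBl hermZl; field.
have := herm_self_ge0_orthogonal n_neg v_perp.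
have -> : herm v v = herm a a - herm n a * herm a n / herm n n.
  by rewrite /v !(hermBl, hermBr, hermZl, hermZr) !(conjCM, conjCV) !conj_herm; field.
by rewrite subr_ge0 ler_ndivrMr // mulrC.
Qed.

(* The Gram determinant of three vectors equals the determinant of the form,
   which is -1, times the squared modulus of their determinant. *)
Lemma gram_det_le0 u v x :
  herm u u * (herm v v * herm x x - herm v x * herm x v)
  - herm u v * (herm v u * herm x x - herm v x * herm x u)
  + herm u x * (herm v u * herm x v - herm v v * herm x u) <= 0.
Proof.
set d := u i0 0 * (v i1 0 * x i2 0 - v i2 0 * x i1 0)
       - u i1 0 * (v i0 0 * x i2 0 - v i2 0 * x i0 0)
       + u i2 0 * (v i0 0 * x i1 0 - v i1 0 * x i0 0).
have -> : herm u u * (herm v v * herm x x - herm v x * herm x v)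
  - herm u v * (herm v u * herm x x - herm v x * herm x u)
  + herm u x * (herm v u * herm x v - herm v v * herm x u) = - (d * d^*).
  by rewrite !hermE /d !(conjCD, conjCB, conjCM); ring.
by rewrite oppr_le0 mul_conjC_ge0.
Qed.

Lemma herm_refl_self n a : herm a a != 0 ->
  herm (refl a *m n) n = 2 * (herm n a * herm a n) / herm a a - herm n n.
Proof. by move=> ha; rewrite reflE hermBl hermZl; field. Qed.

Lemma herm_refl_self_le {n a} : herm n n < 0 -> herm a a < 0 ->
  herm (refl a *m n) n <= herm n n.
Proof.
move=> n_neg a_neg; rewrite herm_refl_self ?lt_eqF // lerBlDr -mulrA mulr_natl mulr2n.
have PA_le : herm n a * herm a n / herm a a <= herm n n.
  by rewrite ler_ndivrMr // herm_reverse_CS.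
exact: lerD.
Qed.

Lemma herm_refl_selfC n a : herm a a != 0 ->
  herm n (refl a *m n) = herm (refl a *m n) n.
Proof.
move=> ha; rewrite -conj_herm herm_refl_self //.
by rewrite !(conjCB, conjCM, conjCV, conjC_nat) !conj_herm; ring.
Qed.

Lemma refl_pair_Re_lt0 {n a b} : herm n n < 0 -> herm a a < 0 -> herm b b < 0 ->
  herm (refl a *m n) (refl b *m n) + (herm (refl a *m n) (refl b *m n))^* < 0.
Proof.
move=> n_neg a_neg b_neg.
have [a_neq0 b_neq0] : herm a a != 0 /\ herm b b != 0 by rewrite !lt_eqF.
have := gram_det_le0 n (refl a *m n) (refl b *m n).
rewrite !refl_isometry // !herm_refl_selfC // -[herm (refl b *m n) _]conj_herm.
move: (herm_refl_self_le n_neg a_neg) (herm_refl_self_le n_neg b_neg).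
set X := herm (refl a *m n) n; set Y := herm (refl b *m n) n.
set z := herm (refl a *m n) (refl b *m n); set N := herm n n => XN YN gram.
apply: (@gram_cubic_lt0 _ N X Y (z * z^*)) => //.
- exact: mul_conjC_ge0.
- by rewrite CrealE conjCD conjCK addrC.
- by move: gram; congr (_ <= _); ring.
Qed.

Lemma exists_neg_orthogonal {q} : 0 < herm q q ->
  exists2 n, herm n q = 0 & herm n n < 0.
Proof.
move=> q_pos; set e : 'cV[C]_3 := delta_mx i0 0.
have e_neg : herm e e = -1 by rewrite hermE !mxE /=; ring.
exists (herm e q *: q - herm q q *: e); first by rewrite hermBl !hermZl; ring.
suff -> : herm (herm e q *: q - herm q q *: e) (herm e q *: q - herm q q *: e)
    = - (herm q q * (herm e q * herm q e + herm q q)).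
  by rewrite oppr_lt0 mulr_gt0 // ltr_wpDl // -[herm q e]conj_herm mul_conjC_ge0.
by rewrite !(hermBl, hermBr, hermZl, hermZr) e_neg !conj_herm; ring.
Qed.

Lemma refl_prod5_neq1 p0 p1 p2 p3 p4 : 0 < herm p0 p0 ->
  herm p1 p1 < 0 -> herm p2 p2 < 0 -> herm p3 p3 < 0 -> herm p4 p4 < 0 ->
  refl p4 *m refl p3 *m refl p2 *m refl p1 *m refl p0 != 1%:M.
Proof.
move=> p0_pos p1_neg p2_neg p3_neg p4_neg; apply/eqP => prod1.
have [n n_perp n_neg] := exists_neg_orthogonal p0_pos.
have [p3_neq0 p4_neq0] : herm p3 p3 != 0 /\ herm p4 p4 != 0 by rewrite !lt_eqF.
have split_prod : refl p2 *m (refl p1 *m n) = - (refl p3 *m (refl p4 *m n)).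
  move: (congr1 (mulmx^~ n) prod1).
  rewrite mul1mx -!mulmxA (refl_orthogonal n_perp) !mulmxN.
  move/(congr1 (fun v => - (refl p3 *m (refl p4 *m v)))).
  by rewrite !mulmxN opprK !reflK.
have := refl_pair_Re_lt0 n_neg p1_neg p2_neg.
rewrite -refl_adj split_prod hermNl conjCN -opprD oppr_lt0.
have := refl_pair_Re_lt0 n_neg p4_neg p3_neg; rewrite -refl_adj.
by move=> /lt_trans/[apply]; rewrite ltxx.
Qed.

Lemma has_sign1 p : has_sign 1 p -> 0 < herm p p.
Proof. by case=> [[]|[]]. Qed.

Lemma has_signN1 p : has_sign (-1)%Z p -> herm p p < 0.
Proof. by case=> [[]|[]]. Qed.

End HermitianForm.

Section Conjugation.
Variable R : rcfType.
Local Notation C := (R[i]).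
Local Notation conjv := (map_mx (@Num.conj C)).
Implicit Types (x y p q : 'cV[C]_3).

Lemma conj_sgnJ k : (sgnJ R k)^* = sgnJ R k.
Proof. by rewrite /sgnJ; case: ifP; rewrite ?conjCN conjC1. Qed.

Lemma herm_map_conj x y : herm (conjv x) (conjv y) = (herm x y)^*.
Proof. by rewrite !hermE !mxE !(conjCD, conjCN, conjCM). Qed.

Lemma refl_map_conj p : refl (conjv p) = conjv (refl p).
Proof.
apply/matrixP => i j; rewrite !mxE herm_map_conj.
by rewrite !(conjCB, conjCM, conjCV, conjC_nat) conj_sgnJ.
Qed.

Lemma ta_map_conj p q : ta (conjv p) (conjv q) = (ta p q)^*.
Proof. by rewrite /ta !herm_map_conj !(conjCM, conjCV). Qed.

Lemma in_P_map_conj Sigma delta (p : 'I_5 -> 'cV[C]_3) :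
  in_P Sigma delta p -> in_P Sigma delta^* (fun i => conjv (p i)).
Proof.
case=> iso ta_ok sign prod; split.
- by move=> i; rewrite /nonisotropic herm_map_conj conj_herm; apply: iso.
- move=> i j /ta_ok[ta0 ta1]; rewrite ta_map_conj conjC_eq0.
  by split; rewrite // fmorph_eq1.
- by move=> i; rewrite /has_sign herm_map_conj conj_herm; apply: sign.
- by rewrite !refl_map_conj -!map_mxM prod map_scalar_mx.
Qed.

Lemma omega_root : omega R ^+ 2 + omega R + 1 = 0.
Proof.
rewrite /omega expr2.
have -> : (-1 + 'i * sqrtC 3) / 2 * ((-1 + 'i * sqrtC 3) / 2) + (-1 + 'i * sqrtC 3) / 2 + 1
  = ('i ^+ 2 * sqrtC 3 ^+ 2 + 3) / 4 :> C by field.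
by rewrite sqrtCK sqrCi; field.
Qed.

Lemma conj_omega : (omega R)^* = omega R ^+ 2.
Proof.
have sqrt3_real : (sqrtC 3 : C)^* = sqrtC 3.
  by apply/CrealP; rewrite sqrtC_real // ler0n.
have -> : omega R ^+ 2 = - omega R - 1 by rewrite -[LHS]subr0 -omega_root; ring.
rewrite /omega !(conjCM, conjCD, conjCV, conjC_nat) conjCN conjC1 conjCi sqrt3_real.
by field.
Qed.

End Conjugation.

(* (a, b) : eis stands for a + b omega in Z[omega], where omega^2 = -1 - omega. *)
Definition eis := (Z * Z)%type.

Definition eis_add (x y : eis) : eis := (x.1 + y.1, x.2 + y.2).
Definition eis_opp (x : eis) : eis := (- x.1, - x.2).
Definition eis_mul (x y : eis) : eis :=
  (x.1 * y.1 - x.2 * y.2, x.1 * y.2 + x.2 * y.1 - x.2 * y.2).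
Definition eis_conj (x : eis) : eis := (x.1 - x.2, - x.2).
Definition eis_norm (x : eis) : Z := x.1 * x.1 - x.1 * x.2 + x.2 * x.2.

Definition eis_herm (u v : 'I_3 -> eis) : eis :=
  eis_add (eis_add (eis_opp (eis_mul (u i0) (eis_conj (v i0))))
                   (eis_mul (u i1) (eis_conj (v i1))))
          (eis_mul (u i2) (eis_conj (v i2))).

Definition sgnZ (k : 'I_3) : Z := if k == 0 :> nat then -1 else 1.

Definition eis_scale (c : Z) (x : eis) : eis := (c * x.1, c * x.2).

(* <p, p> R^p for the point p with coordinates u. *)
Definition eis_refl (u : 'I_3 -> eis) (i j : 'I_3) : eis :=
  eis_add (eis_scale (2 * sgnZ j) (eis_mul (u i) (eis_conj (u j))))
          (eis_opp (eis_scale (i == j)%:R (eis_herm u u))).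

Definition eis_mxmul (A B : 'I_3 -> 'I_3 -> eis) (i j : 'I_3) : eis :=
  eis_add (eis_add (eis_mul (A i i0) (B i0 j)) (eis_mul (A i i1) (B i1 j)))
          (eis_mul (A i i2) (B i2 j)).

Lemma eis_herm_self_real u : (eis_herm u u).2 = 0.
Proof. by rewrite /=; ring. Qed.

Lemma eis_mul_conj x : eis_mul x (eis_conj x) = (eis_norm x, 0).
Proof. by rewrite /eis_mul /eis_conj /eis_norm /=; congr pair; ring. Qed.

Section WitnessData.
Local Open Scope Z_scope.
Definition witness_data : seq (seq eis) :=
  [:: [:: (-3, 2); (1, -2); (1, -4)];
      [:: (-13, 8); (1, -3); (2, -16)];
      [:: (1, -42); (9, 7); (22, 44)];
      [:: (1, 0); (0, 0); (0, 0)];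
      [:: (3, 0); (-1, -1); (0, 0)]].
End WitnessData.

Definition witness (i : 'I_5) (k : 'I_3) : eis := nth (0, 0) (nth [::] witness_data i) k.

Section EisensteinEmbedding.
Variable R : rcfType.
Local Notation C := (R[i]).
Local Notation w := (omega R).

Definition zC (z : Z) : C := (int_of_Z z)%:~R.

Lemma zCD x y : zC (x + y) = zC x + zC y. Proof. by rewrite /zC !rmorphD. Qed.
Lemma zCN x : zC (- x) = - zC x. Proof. by rewrite /zC !rmorphN. Qed.
Lemma zCB x y : zC (x - y) = zC x - zC y. Proof. by rewrite /zC !rmorphB. Qed.
Lemma zCM x y : zC (x * y) = zC x * zC y. Proof. by rewrite /zC rmorphM intrM. Qed.
Lemma zC_nat n : zC n%:R = n%:R. Proof. by rewrite /zC !rmorph_nat. Qed.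
Lemma eq_zC x y : (zC x == zC y) = (x == y).
Proof. by rewrite /zC eqr_int (inj_eq (can_inj int_of_ZK)). Qed.

Lemma zC_sgnZ k : zC (sgnZ k) = sgnJ R k.
Proof. by rewrite /sgnZ /sgnJ; case: ifP => _; rewrite ?zCN /zC rmorph1. Qed.

Lemma zC_eq0 x : (zC x == 0) = (x == 0).
Proof. by rewrite -(eq_zC x 0) /zC rmorph0. Qed.

Lemma conj_zC x : (zC x)^* = zC x. Proof. exact: rmorph_int. Qed.

Definition eisC (x : eis) : C := zC x.1 + zC x.2 * w.

Lemma eisC_add x y : eisC (eis_add x y) = eisC x + eisC y.
Proof. by rewrite /eisC !zCD; ring. Qed.

Lemma eisC_opp x : eisC (eis_opp x) = - eisC x.
Proof. by rewrite /eisC !zCN; ring. Qed.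

Lemma eisC_scale c x : eisC (eis_scale c x) = zC c * eisC x.
Proof. by rewrite /eisC !zCM; ring. Qed.

Lemma eisC_mul x y : eisC (eis_mul x y) = eisC x * eisC y.
Proof.
rewrite /eisC !(zCB, zCD, zCM).
by rewrite -[LHS]addr0 -(mulr0 (zC x.2 * zC y.2)) -(omega_root R); ring.
Qed.

Lemma eisC_conj x : eisC (eis_conj x) = (eisC x)^*.
Proof.
rewrite /eisC conjCD conjCM !conj_zC conj_omega zCB zCN.
by rewrite -[LHS]addr0 -(mulr0 (zC x.2)) -(omega_root R); ring.
Qed.

Lemma eisC_real a : eisC (a, 0) = zC a.
Proof. by rewrite /eisC /= /zC !rmorph0 mul0r addr0. Qed.

Lemma eisC_norm x : eisC x * (eisC x)^* = zC (eis_norm x).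
Proof. by rewrite -eisC_conj -eisC_mul eis_mul_conj eisC_real. Qed.

Definition eis_col (u : 'I_3 -> eis) : 'cV[C]_3 := \col_k eisC (u k).
Definition eis_mx (A : 'I_3 -> 'I_3 -> eis) : 'M[C]_3 := \matrix_(i, j) eisC (A i j).

Lemma herm_eis_col u v : herm (eis_col u) (eis_col v) = eisC (eis_herm u v).
Proof. by rewrite hermE !mxE !(eisC_add, eisC_opp, eisC_mul, eisC_conj). Qed.

Lemma herm_eis_col_self u : herm (eis_col u) (eis_col u) = zC (eis_herm u u).1.
Proof. by rewrite herm_eis_col -eisC_real -(eis_herm_self_real u); case: eis_herm. Qed.

Lemma eis_mx_mul A B : eis_mx (eis_mxmul A B) = eis_mx A *m eis_mx B.
Proof.
apply/matrixP => i j; rewrite !mxE sum3 !mxE.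
by rewrite !(eisC_add, eisC_mul).
Qed.

Lemma eq_eis_mx A B : (forall i j, A i j = B i j) -> eis_mx A = eis_mx B.
Proof. by move=> eqAB; apply/matrixP => i j; rewrite !mxE eqAB. Qed.

Lemma eis_mx_scalar x : eis_mx (fun i j => if i == j then x else (0, 0)) = (eisC x)%:M.
Proof.
apply/matrixP => i j; rewrite !mxE; case: eqP => _ //=.
by rewrite eisC_real /zC rmorph0.
Qed.

Lemma refl_eis_col u : herm (eis_col u) (eis_col u) != 0 ->
  refl (eis_col u) = (herm (eis_col u) (eis_col u))^-1 *: eis_mx (eis_refl u).
Proof.
move=> hu; apply/matrixP => i j; rewrite !mxE herm_eis_col /eis_refl.
move: hu; rewrite herm_eis_col; move: (eis_herm u u) => h hu.
rewrite eisC_add eisC_opp !eisC_scale eisC_mul eisC_conj zCM zC_sgnZ !zC_nat.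
by field.
Qed.

Lemma ta_eis_col_neq01 u v :
  let hu := (eis_herm u u).1 in let hv := (eis_herm v v).1 in
  hu * hv != 0 -> eis_norm (eis_herm u v) != 0 -> eis_norm (eis_herm u v) != hu * hv ->
  ta (eis_col u) (eis_col v) != 0 /\ ta (eis_col u) (eis_col v) != 1.
Proof.
move=> hu hv huv_neq0 norm_neq0 norm_neq.
have -> : ta (eis_col u) (eis_col v) = zC (eis_norm (eis_herm u v)) / zC (hu * hv).
  by rewrite /ta !herm_eis_col_self -[herm (eis_col v) _]conj_herm herm_eis_col eisC_norm zCM.
split; first by rewrite mulf_neq0 ?invr_eq0 ?zC_eq0.
by apply/eqP => /divr1_eq/eqP; rewrite eq_zC; apply/negP.
Qed.

Lemma witness_in_P : in_P Sigma8 (omega R) (fun i => eis_col (witness i)).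
Proof.
pose h i := (eis_herm (witness i) (witness i)).1.
have herm_h i : herm (eis_col (witness i)) (eis_col (witness i)) = zC (h i).
  exact: herm_eis_col_self.
have iso i : herm (eis_col (witness i)) (eis_col (witness i)) != 0.
  by rewrite herm_h zC_eq0; case: i => [[|[|[|[|[|//]]]]] ?]; vm_compute.
split; first exact: iso.
- move=> i j; case: i => [[|[|[|[|[|//]]]]] ?]; case: j => [[|[|[|[|[|//]]]]] ?] /eqP ij;
    first [by exfalso; apply: ij; apply: val_inj | by apply: ta_eis_col_neq01; vm_compute].
- move=> i; rewrite /has_sign herm_h /zC.
  by case: i => [[|[|[|[|[|//]]]]] ?]; [right | left..]; rewrite ?ltr0z ?ltrz0; vm_compute; split.
rewrite !refl_eis_col //; do ![rewrite -scalemxAl | rewrite -scalemxAr].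
rewrite !scalerA -!eis_mx_mul.
set c := h 4%:R * h 3%:R * h 2%:R * h 1 * h 0.
rewrite (@eq_eis_mx _ (fun i j => if i == j then (0, c) else (0, 0))); last first.
  by move=> i j; case: (ord3P i) => ->; case: (ord3P j) => ->; vm_compute.
rewrite eis_mx_scalar scale_scalar_mx /eisC /c !zCM -!herm_h /zC rmorph0 add0r.
by congr scalar_mx; field; rewrite !iso.
Qed.

End EisensteinEmbedding.

Theorem mainTheorem8 (R : rcfType) :
  (~ exists p : 'I_5 -> 'cV[R[i]]_3, in_P Sigma8 1 p) /\
  (exists p : 'I_5 -> 'cV[R[i]]_3, in_P Sigma8 (omega R) p) /\
  (exists p : 'I_5 -> 'cV[R[i]]_3, in_P Sigma8 ((omega R) ^+ 2) p).
Proof.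
split.
  case=> p [_ _ sign prod1]; move/eqP: prod1; apply/negP.
  apply: refl_prod5_neq1; [exact: has_sign1 (sign 0) | exact: has_signN1 (sign 1) |
    exact: has_signN1 (sign 2) | exact: has_signN1 (sign 3) | exact: has_signN1 (sign 4)].
split; first by exists (fun i => eis_col R (witness i)); apply: witness_in_P.
exists (fun i => map_mx Num.conj (eis_col R (witness i))).
by rewrite -conj_omega; apply/in_P_map_conj/witness_in_P.
Qed.
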